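(* Let $q$ be a prime power and let $1\le t_1<\cdots<t_r<n$ be divisors of $n$ such that $t_i$ divides $t_{i+1}$ for $1\le i\le r-1$. Let $\mathcal{F}=(\mathbb{F}_{q^{t_1}},\ldots,\mathbb{F}_{q^{t_r}})$ be the Galois flag of this type on $\mathbb{F}_{q^n}$ and let $\beta\in\mathbb{F}_{q^n}^*$. For each $1\le i\le r$, let $\beta_i$ be a generator of the cyclic group $\langle\beta\rangle\cap\mathbb{F}_{q^{t_i}}^*$ (which equals the stabilizer of $\mathbb{F}_{q^{t_i}}$ in $\langle\beta\rangle$). Then: (1) for each $1\le i\le r$, $\mathrm{Orb}_\beta(\mathbb{F}_{q^{t_i}})$ is a partial spread of dimension $t_i$ of $\mathbb{F}_{q^n}$; (2) for every $1\le i<j\le r$ and every $0\le l\le|\beta_j|-1$, the $\beta_j$-cyclic orbit code $\mathrm{Orb}_{\beta_j}(\mathbb{F}_{q^{t_i}}\beta^l)$ is a partial spread of dimension $t_i$ of the subspace $\mathbb{F}_{q^{t_j}}\beta^l$.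
   Context: $\mathbb{F}_{q^n}$ is regarded as an $\mathbb{F}_q$-vector space. For $\gamma\in\mathbb{F}_{q^n}^*$ and an $\mathbb{F}_q$-subspace $\mathcal{U}$, $\mathcal{U}\gamma=\{u\gamma:u\in\mathcal{U}\}$. For $\beta\in\mathbb{F}_{q^n}^*$ of multiplicative order $|\beta|$, $\mathrm{Orb}_\beta(\mathcal{U})=\{\mathcal{U}\beta^j:0\le j\le|\beta|-1\}$. A partial spread of dimension $t$ of an $\mathbb{F}_q$-subspace $\mathcal{W}$ is a set of $t$-dimensional $\mathbb{F}_q$-subspaces of $\mathcal{W}$ that pairwise intersect in $\{0\}$. *)

From HB Require Import structures.
From mathcomp Require Import all_boot all_algebra all_field.
Set Implicit Arguments. Unset Strict Implicit. Unset Printing Implicit Defensive.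
Import GRing.Theory.
Local Open Scope ring_scope.

Section Defs.
Variables (F : finFieldType) (L : fieldExtType F).

Definition vsmul (U : {vspace L}) (g : L) : {vspace L} := (amulr g @: U)%VS.

Definition is_mult_order (x : L) (N : nat) : Prop :=
  (0 < N)%N /\ x ^+ N = 1 /\ (forall m, (0 < m < N)%N -> x ^+ m != 1).

Definition Orb (b : L) (N : nat) (U : {vspace L}) : {vspace L} -> Prop :=
  fun V => exists2 j : nat, (j < N)%N & V = vsmul U (b ^+ j).

Definition partial_spread (W : {vspace L}) (t : nat) (S : {vspace L} -> Prop) : Prop :=
  (forall U, S U -> (U <= W)%VS /\ \dim U = t) /\
  (forall U V, S U -> S V -> U != V -> (U :&: V)%VS = 0%VS).
End Defs.

(* Right multiplication by a nonzero element is a linear bijection, so every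
   translate K x of a subfield K has dimension dim K.  Since K^* is a group,
   a nonzero vector u a of K a generates it: K (u a) = K a.  Hence two
   translates sharing a nonzero vector coincide, and distinct translates meet
   trivially.  For part (2), t_i | t_j puts F_{q^t_i} inside F_{q^t_j}, and
   beta_j in F_{q^t_j} gives F_{q^t_i} beta^l beta_j^k <= F_{q^t_j} beta^l. *)
From HB Require Import structures.
From mathcomp Require Import all_boot all_algebra all_field.
Set Implicit Arguments. Unset Strict Implicit. Unset Printing Implicit Defensive.
Local Open Scope ring_scope.
Import GRing.Theory.

Section SubspaceTranslates.
Variables (F : finFieldType) (L : fieldExtType F).
Implicit Types (U V W : {vspace L}) (K : {aspace L}) (a b g x : L).

Lemma vsmulP U g x : reflect (exists2 u, u \in U & x = u * g) (x \in vsmul U g).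
Proof. by apply: (iffP memv_imgP) => -[u Uu ->]; exists u; rewrite ?lfunE. Qed.

Lemma vsmulM U a b : vsmul (vsmul U a) b = vsmul U (a * b).
Proof.
apply/vspaceP => x; apply/vsmulP/vsmulP => [[_ /vsmulP[u Uu ->] ->]|[u Uu ->]].
  by exists u; rewrite ?mulrA.
by exists (u * a); [apply/vsmulP; exists u | rewrite mulrA].
Qed.

Lemma vsmulS U V g : (U <= V)%VS -> (vsmul U g <= vsmul V g)%VS.
Proof. exact: limgS. Qed.

Lemma dim_vsmul U g : g != 0 -> \dim (vsmul U g) = \dim U.
Proof.
move=> g_neq0; apply: limg_dim_eq.
suff /eqP -> : lker (amulr g) == 0%VS by rewrite capv0.
by apply/lker0P => x y; rewrite !lfunE; apply: mulIf.
Qed.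

Lemma vsmul_aspaceMl K c g : c \in K -> c != 0 -> vsmul K (c * g) = vsmul K g.
Proof.
move=> Kc c_neq0; apply/vspaceP => x; apply/vsmulP/vsmulP => -[u Ku ->].
  by exists (u * c); rewrite ?rpredM ?mulrA.
by exists (u / c); rewrite ?rpred_div // mulrA divfK.
Qed.

Lemma vsmul_aspace_mem K a x : x \in vsmul K a -> x != 0 -> vsmul K x = vsmul K a.
Proof.
case/vsmulP=> u Ku -> ua_neq0.
by apply: vsmul_aspaceMl => //; apply: contraNneq ua_neq0 => ->; rewrite mul0r.
Qed.

Lemma vsmul_aspace_capv0 K a b :
  vsmul K a != vsmul K b -> (vsmul K a :&: vsmul K b = 0)%VS.
Proof.
apply: contraNeq => cap_neq0; have := memv_pick (vsmul K a :&: vsmul K b)%VS.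
have : vpick (vsmul K a :&: vsmul K b)%VS != 0 by rewrite vpick0.
move=> x_neq0 /memv_capP[xa xb].
by rewrite -(vsmul_aspace_mem xa x_neq0) (vsmul_aspace_mem xb x_neq0).
Qed.

Lemma translates_partial_spread K W (S : {vspace L} -> Prop) :
  (forall V, S V -> exists2 x, x != 0 & V = vsmul K x) ->
  (forall V, S V -> (V <= W)%VS) ->
  partial_spread W (\dim K) S.
Proof.
move=> S_translate S_sub; split=> [V SV | V1 V2 /S_translate[a _ ->] /S_translate[b _ ->]].
  by split; [exact: S_sub | have [x /dim_vsmul x_neq0 ->] := S_translate V SV].
exact: vsmul_aspace_capv0.
Qed.

(* By Fermat's little theorem K = {x | x ^+ (#|F| ^ \dim K) = x}, and this
   identity is preserved by iterating the Frobenius map x |-> x ^+ #|F|^\dim K. *)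
Lemma aspace_subv_dvd_dim K1 K2 : (\dim K1 %| \dim K2)%N -> (K1 <= K2)%VS.
Proof.
case/dvdnP=> m dimK2; apply/subvP => x.
rewrite !Fermat's_little_theorem dimK2 mulnC expnM => /eqP x_fixed; apply/eqP.
by elim: m {dimK2} => [|m IHm]; rewrite ?expn0 ?expr1 // expnSr exprM IHm.
Qed.

End SubspaceTranslates.

Lemma chain_dvdn (t : nat -> nat) r :
  (forall i, (i.+1 < r)%N -> (t i %| t i.+1)%N) ->
  forall i j, (i <= j)%N -> (j < r)%N -> (t i %| t j)%N.
Proof.
move=> t_dvd i; elim=> [|j IHj]; first by rewrite leqn0 => /eqP ->.
rewrite leq_eqVlt => /predU1P[-> //|/IHj ti_tj jr].
exact: dvdn_trans (ti_tj (ltnW jr)) (t_dvd j jr).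
Qed.

Theorem corollary4p13 (F : finFieldType) (L : fieldExtType F) (q n r : nat)
  (t : nat -> nat) (E : nat -> {aspace L}) (beta : L) (bs : nat -> L) :
  #|F| = q ->
  n = \dim {: L}%VS ->
  (0 < r)%N ->
  (1 <= t 0)%N ->
  (forall i, (i.+1 < r)%N -> (t i < t i.+1)%N /\ (t i %| t i.+1)%N) ->
  (t r.-1 < n)%N ->
  (forall i, (i < r)%N -> (t i %| n)%N) ->
  (* E i is the subfield F_{q^{t i}} of L (the unique one of dimension t i over F_q) *)
  (forall i, (i < r)%N -> \dim (E i) = t i) ->
  beta != 0 ->
  (* bs i generates the cyclic group <beta> \cap F_{q^{t i}}^* *)
  (forall i, (i < r)%N -> forall x : L,
      (x \in E i /\ x != 0 /\ exists k : nat, x = beta ^+ k) <->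
      (exists k : nat, x = bs i ^+ k)) ->
  (forall i, (i < r)%N -> forall N, is_mult_order beta N ->
      partial_spread {: L}%VS (t i) (Orb beta N (E i))) /\
  (forall i j, (i < j)%N -> (j < r)%N -> forall Nj, is_mult_order (bs j) Nj ->
      forall l : nat, (l < Nj)%N ->
      partial_spread (vsmul (E j) (beta ^+ l)) (t i)
                     (Orb (bs j) Nj (vsmul (E i) (beta ^+ l)))).
Proof.
move=> _ _ _ _ t_chain _ _ dimE beta_neq0 bsE; split.
  move=> i ir N _; rewrite -dimE //.
  apply: translates_partial_spread => [_ [k _ ->]|V _]; last exact: subvf.
  by exists (beta ^+ k); rewrite ?expf_neq0.
move=> i j ij jr Nj _ l _; have ir := ltn_trans ij jr.
have [Ej_bs [bs_neq0 _]] := (bsE j jr (bs j)).2 (ex_intro _ 1%N (esym (expr1 _))).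
have Ei_sub_Ej : (E i <= E j)%VS.
  apply: aspace_subv_dvd_dim; rewrite !dimE //.
  by apply: (chain_dvdn (fun k kr => (t_chain k kr).2)) => //; apply: ltnW.
rewrite -dimE //; apply: translates_partial_spread => _ [k _ ->]; rewrite vsmulM.
  by exists (beta ^+ l * bs j ^+ k); rewrite // mulf_neq0 ?expf_neq0.
rewrite -[X in (_ <= X)%VS](@vsmul_aspaceMl _ _ (E j) (bs j ^+ k)) ?rpredX ?expf_neq0 //.
by rewrite mulrC vsmulS.
Qed.
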